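(* Let $G$ be a graph on vertex set $\{1,\dots,N\}$ with independence number $\alpha(G)$; let $G_x$ be the set of neighbours of $x$ and $N_x=|G_x|$. In the equality problem defined by $G$, Alice receives $x$ and Bob receives $y$, with the promise that $x=y$ or $x\in G_y$; Bob outputs $z\in\{1,2\}$, and the success metric is $$\mathcal{S}(G)=\frac{1}{\sum_x N_x+N}\sum_{y=1}^N\Big(p(1|x=y,y)+\sum_{x\in G_y}p(2|x,y)\Big).$$ For a classical protocol with encoding $p_e(m|x)$ (messages $m$ from a finite set of arbitrary size) and decoding $p_d(z|y,m)$, so that $p(z|x,y)=\sum_m p_e(m|x)p_d(z|y,m)$, let $\mathcal{S}_C(G)$ be its success metric and $\mathcal{D}_C=\frac1N\sum_m\max_x p_e(m|x)$ its distinguishability. Then every classical protocol satisfies $$\frac{1}{N\alpha(G)}\Big(\big(\textstyle\sum_x N_x+N\big)\big(\mathcal{S}_C(G)-1\big)+N\Big)\le \mathcal{D}_C.$$ *)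

From HB Require Import structures.
From mathcomp Require Import all_boot all_order all_algebra.
Set Implicit Arguments. Unset Strict Implicit. Unset Printing Implicit Defensive.
Import Order.TTheory GRing.Theory Num.Theory.
Local Open Scope ring_scope.

Definition simple_graph (N : nat) (e : rel 'I_N) : Prop :=
  irreflexive e /\ symmetric e.

Definition nbhd (N : nat) (e : rel 'I_N) (x : 'I_N) : {set 'I_N} :=
  [set y | e x y].
Definition deg (N : nat) (e : rel 'I_N) (x : 'I_N) : nat := #|nbhd e x|.

Definition independent (N : nat) (e : rel 'I_N) (S : {set 'I_N}) : bool :=
  [forall x in S, forall y in S, ~~ e x y].
Definition indep_number (N : nat) (e : rel 'I_N) : nat :=
  \max_(S : {set 'I_N} | independent e S) #|S|.

(* Classical protocol: encoding pe x m = p_e(m|x), decoding pd y m z = p_d(z|y,m).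
   Outputs z in {1,2} are encoded as z : 'I_2, with index 0 <-> output 1 and
   index 1 <-> output 2. *)
Definition out1 : 'I_2 := ord0.
Definition out2 : 'I_2 := ord_max.

Definition encoding (R : realFieldType) (N : nat) (M : finType)
  (pe : 'I_N -> M -> R) : Prop :=
  (forall x m, 0 <= pe x m) /\ (forall x, \sum_m pe x m = 1).

Definition decoding (R : realFieldType) (N : nat) (M : finType)
  (pd : 'I_N -> M -> 'I_2 -> R) : Prop :=
  (forall y m z, 0 <= pd y m z) /\ (forall y m, \sum_z pd y m z = 1).

Definition pcl (R : realFieldType) (N : nat) (M : finType)
  (pe : 'I_N -> M -> R) (pd : 'I_N -> M -> 'I_2 -> R)
  (z : 'I_2) (x y : 'I_N) : R :=
  \sum_m pe x m * pd y m z.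

Definition success (R : realFieldType) (N : nat) (e : rel 'I_N) (M : finType)
  (pe : 'I_N -> M -> R) (pd : 'I_N -> M -> 'I_2 -> R) : R :=
  ((\sum_x (deg e x)%:R + N%:R)^-1) *
  \sum_y (pcl pe pd out1 y y + \sum_(x in nbhd e y) pcl pe pd out2 x y).

Definition distinguishability (R : realFieldType) (N : nat) (M : finType)
  (pe : 'I_N -> M -> R) : R :=
  (N%:R)^-1 * \sum_m \big[Num.max/0]_x pe x m.

From HB Require Import structures.
From mathcomp Require Import all_boot all_order all_algebra.
Set Implicit Arguments. Unset Strict Implicit. Unset Printing Implicit Defensive.
Import Order.TTheory GRing.Theory Num.Theory.
Local Open Scope ring_scope.

(* Write p_m(x) = p_e(m|x) and d_m(y) = p_d(1|y,m).  Using p(2|x,y) = 1 - p(1|x,y),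
   the numerator of the left-hand side is
     sum_m sum_y d_m(y) (p_m(y) - sum_{x in G_y} p_m(x)),
   and since G is symmetric this equals sum_m sum_x p_m(x) c_m(x), where
   c_m(x) = d_m(x) - sum_{y in G_x} d_m(y).  Bounding p_m by max_x p_m(x) on the
   set Q of vertices where c_m > 0 and dropping the other terms, it remains to show
   sum_{x in Q} c_m(x) <= alpha(G).  Keeping only neighbours inside Q and double
   counting, that sum is at most sum_{y in Q} (1 - |G_y cap Q|) d_m(y); as
   0 <= d_m <= 1, only the vertices of Q without neighbours in Q contribute, at most
   1 each, and these form an independent set. *)

Section Graph.
Variables (N : nat) (e : rel 'I_N).

Lemma card_le_indep_number (S : {set 'I_N}) :
  independent e S -> (#|S| <= indep_number e)%N.
Proof. exact: leq_bigmax_cond. Qed.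

Lemma indep_number_gt0 : irreflexive e -> (0 < N)%N -> (0 < indep_number e)%N.
Proof.
move=> e_irr N_gt0; pose x0 : 'I_N := Ordinal N_gt0.
rewrite -(cards1 x0) card_le_indep_number //.
by apply/forallP => x; apply/implyP; rewrite inE => /eqP ->;
   apply/forallP => y; apply/implyP; rewrite inE => /eqP ->; rewrite e_irr.
Qed.

Lemma independent_isolated (Q : {set 'I_N}) :
  independent e [set x in Q | nbhd e x :&: Q == set0].
Proof.
apply/forallP => x; apply/implyP; rewrite inE => /andP[_ /eqP isox].
apply/forallP => y; apply/implyP; rewrite inE => /andP[yQ _].
apply/negP => exy; have : y \in nbhd e x :&: Q by rewrite !inE exy.
by rewrite isox inE.
Qed.

Hypothesis e_sym : symmetric e.

Lemma sum_nbhdC (V : nmodType) (F : 'I_N -> 'I_N -> V) :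
  \sum_y \sum_(x in nbhd e y) F x y = \sum_x \sum_(y in nbhd e x) F x y.
Proof.
rewrite (exchange_big_dep xpredT) //=; apply: eq_bigr => x _.
by apply: eq_bigl => y; rewrite !inE e_sym.
Qed.

Definition excess (V : zmodType) (f : 'I_N -> V) (x : 'I_N) : V :=
  f x - \sum_(y in nbhd e x) f y.

Lemma sum_mul_excessC (R : comRingType) (d p : 'I_N -> R) :
  \sum_y d y * excess p y = \sum_x p x * excess d x.
Proof.
rewrite /excess; under eq_bigr do rewrite mulrBr mulr_sumr.
under [RHS]eq_bigr do rewrite mulrBr mulr_sumr.
rewrite !sumrB sum_nbhdC; congr (_ - _).
  by apply: eq_bigr => x _; rewrite mulrC.
by apply: eq_bigr => x _; apply: eq_bigr => y _; rewrite mulrC.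
Qed.

Lemma sum_excess_le_indep_number (R : numDomainType) (d : 'I_N -> R)
    (Q : {set 'I_N}) :
  (forall x, 0 <= d x <= 1) -> \sum_(x in Q) excess d x <= (indep_number e)%:R.
Proof.
move=> d01; have d_ge0 x : 0 <= d x by case/andP: (d01 x).
pose k y := #|nbhd e y :&: Q|.
have drop_outside x : excess d x <= d x - \sum_(y in nbhd e x :&: Q) d y.
  rewrite /excess (big_setID Q) /= lerD2l lerN2 lerDl.
  exact: sumr_ge0.
have double_count : \sum_(x in Q) \sum_(y in nbhd e x :&: Q) d y
    = \sum_(y in Q) (k y)%:R * d y.
  rewrite (exchange_big_dep (mem Q)) => [|x y _]; last by rewrite !inE => /andP[].
  apply: eq_bigr => y yQ; rewrite sumr_const mulr_natl; congr (_ *+ _).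
  have {}yQ : y \in Q := yQ.
  by rewrite /k; apply: eq_card => x; rewrite unfold_in /= !inE e_sym yQ andbT andbC.
pose I := [set y in Q | nbhd e y :&: Q == set0].
apply: le_trans (ler_sum _ (fun x _ => drop_outside x)) _.
rewrite sumrB double_count -sumrB.
have term_le y : y \in Q -> d y - (k y)%:R * d y <= (if y \in I then 1 else 0).
  move=> yQ; rewrite inE yQ -cards_eq0 -/(k y); case: (k y) => [|n] /=.
    by rewrite mul0r subr0; case/andP: (d01 y).
  by rewrite subr_le0 ler_peMl // ler1n.
apply: le_trans (ler_sum _ term_le) _.
have -> : \sum_(y in Q) (if y \in I then 1 else 0) = #|I|%:R :> R.
  rewrite -big_mkcondr sumr_const; congr (_ *+ _).
  by apply: eq_card => y; rewrite unfold_in /= !inE andbA andbb.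
by rewrite ler_nat card_le_indep_number // independent_isolated.
Qed.

Lemma sum_mul_excess_le (R : realDomainType) (p d : 'I_N -> R) (P : R) :
  0 <= P -> (forall x, 0 <= p x <= P) -> (forall x, 0 <= d x <= 1) ->
  \sum_x p x * excess d x <= (indep_number e)%:R * P.
Proof.
move=> P_ge0 p0P d01; pose Q := [set x | 0 < excess d x].
have term_le x : p x * excess d x <= (if x \in Q then P * excess d x else 0).
  have /andP[p_ge0 p_leP] := p0P x; rewrite inE; case: ifPn => [excess_gt0|].
    by rewrite ler_wpM2r // ltW.
  by rewrite -leNgt => excess_le0; rewrite mulr_ge0_le0.
apply: le_trans (ler_sum _ (fun x _ => term_le x)) _.
rewrite -big_mkcond /= -mulr_sumr mulrC ler_wpM2r //.
exact: sum_excess_le_indep_number.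
Qed.

End Graph.

Section Protocol.
Variables (R : realFieldType) (N : nat) (M : finType).
Variables (pe : 'I_N -> M -> R) (pd : 'I_N -> M -> 'I_2 -> R).
Hypotheses (pe_enc : encoding pe) (pd_dec : decoding pd).

Lemma decoding_out2 y m : pd y m out2 = 1 - pd y m out1.
Proof.
have [_ pd_sum1] := pd_dec.
rewrite -(pd_sum1 y m) big_ord_recr big_ord1 /=.
have -> : widen_ord (leqnSn 1) ord0 = out1 by apply: val_inj.
by rewrite addrC addrK.
Qed.

Lemma pcl_out2 x y : pcl pe pd out2 x y = 1 - pcl pe pd out1 x y.
Proof.
have [_ pe_sum1] := pe_enc.
rewrite /pcl -(pe_sum1 x) -sumrB; apply: eq_bigr => m _.
by rewrite decoding_out2 mulrBr mulr1.
Qed.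

Lemma success_excess (e : rel 'I_N) : (0 < N)%N ->
  (\sum_x (deg e x)%:R + N%:R) * (success e pe pd - 1) + N%:R
  = \sum_m \sum_y pd y m out1 * excess e (pe^~ m) y.
Proof.
move=> N_gt0; have denom_neq0 : \sum_x (deg e x)%:R + N%:R != 0 :> R.
  by rewrite gt_eqF // ltr_wpDl ?sumr_ge0 // ltr0n.
rewrite /success mulrBr mulrA mulfV // mul1r mulr1 opprD addrA addrNK.
rewrite exchange_big -sumrB; apply: eq_bigr => y _.
rewrite (eq_bigr (fun x => 1 - pcl pe pd out1 x y)) => [|x _]; last exact: pcl_out2.
rewrite sumrB sumr_const /deg addrA addrAC addrK.
under [RHS]eq_bigr do rewrite /excess mulrBr mulr_sumr.
rewrite sumrB exchange_big /=; congr (_ - _).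
  by apply: eq_bigr => m _; rewrite mulrC.
by apply: eq_bigr => x _; apply: eq_bigr => m _; rewrite mulrC.
Qed.

End Protocol.

Theorem theorem3 (R : realFieldType) (N : nat) (e : rel 'I_N) (M : finType)
  (pe : 'I_N -> M -> R) (pd : 'I_N -> M -> 'I_2 -> R) :
  (0 < N)%N -> simple_graph e -> encoding pe -> decoding pd ->
  ((N * indep_number e)%:R)^-1 *
    ((\sum_x (deg e x)%:R + N%:R) * (success e pe pd - 1) + N%:R)
  <= distinguishability pe.
Proof.
move=> N_gt0 [e_irr e_sym] pe_enc pd_dec.
have alpha_gt0 := indep_number_gt0 e_irr N_gt0.
rewrite success_excess // /distinguishability natrM invfM -mulrA.
rewrite ler_wpM2l ?invr_ge0 ?ler0n // ler_pdivrMl ?ltr0n // mulr_sumr.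
apply: ler_sum => m _; rewrite sum_mul_excessC //.
have [pe_ge0 _] := pe_enc; have [pd_ge0 _] := pd_dec.
apply: sum_mul_excess_le => //.
- exact: bigmax_ge_id.
- by move=> x; rewrite pe_ge0 le_bigmax.
- by move=> y; rewrite pd_ge0 -subr_ge0 -(decoding_out2 pd_dec) pd_ge0.
Qed.
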